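(* Let $G=(V,E)$ be a strongly connected directed graph with start $s$ and goal $g$, non-negative edge costs $f'_1,\dots,f'_n$, a monotone composition function $\beta$ defining path costs $f_i(P)=\beta(f'_i(e_1),f'_i(e_2),\dots)$, weights $w\in[0,1]^n$ and $\rho>0$. For any weight vector $w$, the Min-Max Cost Path algorithm described below returns an $s$–$g$ path $P^*\in\arg\min_P\left(\max_i w_i f_i(P)+\rho\sum_{i=1}^n f_i(P)\right)$, the minimum being over all paths from $s$ to $g$. Algorithm: initialize an open list containing the tuple $(0,s,(s))$. While the open list is nonempty: remove a tuple $(\mathit{cost},v,P)$ of minimum cost; if $v=g$, return $P$. Otherwise, for each neighbour $u$ of $v$: form $P^u=P$ extended by $u$; let $\mathcal P$ be the set of paths in the open list ending at $u$; if some $P'\in\mathcal P$ dominates $P^u$ or $P^u$ contains a cycle, skip $u$; otherwise delete from the open list all tuples whose path $P'$ ends at $u$ and is dominated by $P^u$, compute $c^{\max}(P^u)=\max_i w_i f_i(P^u)+\rho\sum_i f_i(P^u)$, and add $(c^{\max}(P^u),u,P^u)$ to the open list. If the open list becomes empty, return failure.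
   Context: A path is a sequence of distinct vertices consecutive pairs of which are edges of $G$. A path $P'$ dominates $P$ if $f_i(P')\le f_i(P)$ for all $i$ with strict inequality for some $i$. Monotonicity of $\beta$: extending a path never decreases any $f_i$, and whenever $f_i(P')\le f_i(P)$ for two paths ending at the same vertex $u$, then $f_i(P'\cup Q)\le f_i(P\cup Q)$ for every continuation $Q$ starting at $u$. *)

From HB Require Import structures.
From mathcomp Require Import all_boot all_order all_algebra.
From Stdlib Require Import Relations.
Set Implicit Arguments. Unset Strict Implicit. Unset Printing Implicit Defensive.
Import Order.TTheory GRing.Theory Num.Theory.
Local Open Scope ring_scope.

Section MinMaxCostPath.
Variables (R : realFieldType) (V : finType) (E : rel V) (n : nat)
  (fe : 'I_n -> V -> V -> R) (beta : seq R -> R)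
  (w : 'I_n -> R) (rho : R) (s g : V).

Definition walk (p : seq V) : bool :=
  if p is x :: t then path E x t else false.

Definition is_path (p : seq V) : bool := walk p && uniq p.

Definition sg_path (p : seq V) : bool :=
  [&& is_path p, head s p == s & last s p == g].

Definition edges (p : seq V) : seq (V * V) := zip p (behead p).

Definition fcost (i : 'I_n) (p : seq V) : R :=
  beta [seq fe i e.1 e.2 | e <- edges p].

Definition dominates (p' p : seq V) : bool :=
  [forall i, fcost i p' <= fcost i p] && [exists i, fcost i p' < fcost i p].

(* max over i of w_i f_i(P) (the bigop default is one of the terms, so for
   n > 0 this is exactly the maximum) *)
Definition maxw (p : seq V) : R :=
  \big[Num.max/head 0 [seq w i * fcost i p | i <- enum 'I_n]]_(i < n)
     (w i * fcost i p).

Definition cmax (p : seq V) : R := maxw p + rho * \sum_(i < n) fcost i p.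

Definition tuple_t := (R * V * seq V)%type.

Inductive state :=
| Open of seq tuple_t
| Ret of seq V
| Fail.

Definition relax (L : seq tuple_t) (P : seq V) (u : V) : seq tuple_t :=
  let Pu := rcons P u in
  if has (fun t => (last s t.2 == u) && dominates t.2 Pu) L || ~~ uniq Pu
  then L
  else rcons [seq t <- L | ~~ ((last s t.2 == u) && dominates Pu t.2)]
             (cmax Pu, u, Pu).

(* one iteration of the while loop; nondeterministic in the choice of the
   minimum-cost tuple and in the order neighbours are processed *)
Inductive step : state -> state -> Prop :=
| step_empty : step (Open [::]) Fail
| step_goal (L : seq tuple_t) (c : R) (v : V) (P : seq V) :
    (c, v, P) \in L -> (forall t, t \in L -> c <= t.1.1) -> v = g ->
    step (Open L) (Ret P)
| step_expand (L : seq tuple_t) (c : R) (v : V) (P : seq V) (ns : seq V) :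
    (c, v, P) \in L -> (forall t, t \in L -> c <= t.1.1) -> v <> g ->
    perm_eq ns [seq u <- enum V | E v u] ->
    step (Open L) (Open (foldl (fun L' u => relax L' P u) (rem (c, v, P) L) ns)).

Definition init_state : state := Open [:: (0, s, [:: s])].

End MinMaxCostPath.

(* Termination: weigh each open entry with path P by K^(K - |P|), K = |V| + 1.
   Open paths are simple, so |P| < K, and expanding an entry replaces it by at
   most |V| entries whose paths are one vertex longer, each weighing K times
   less; the total weight strictly decreases.

   Correctness: along a run, the list H of expanded ("closed") paths and the
   open list L satisfy an invariant: closed paths never end at g; every simple
   one-edge extension of a closed path is weakly dominated, at the same end
   vertex, by a closed or open path; and every proper prefix of a closed or
   open path is closed.  Suppose every open entry costs more than c^max(Q) for
   some s-g path Q.  Walking along Q, each prefix of Q is then weakly dominated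
   by a closed path: an open dominating path would cost at most c^max(Q), by
   monotonicity of beta and of c^max.  For the last prefix, Q itself, this
   yields a closed path ending at g, which is absurd.  So the entry of least
   cost, which the algorithm returns once it ends at g, costs at most
   c^max(Q). *)

Set Warnings "-notation-overridden,-ambiguous-paths".
From mathcomp Require Import all_boot all_order all_algebra.
From Stdlib Require Import Relation_Operators.
Set Implicit Arguments. Unset Strict Implicit. Unset Printing Implicit Defensive.
Import Order.TTheory GRing.Theory Num.Theory.
Local Open Scope ring_scope.

Lemma acc_measure (T : Type) (r : T -> T -> Prop) (I : T -> Prop) (m : T -> nat) :
  (forall x y, I x -> r x y -> I y /\ (m y < m x)%N) ->
  forall x, I x -> Acc (fun y x => r x y) x.
Proof.
move=> r_dec x; have [k] := ubnP (m x).
elim: k x => [|k IH] x; first by rewrite ltn0.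
move=> lt_xk Ix; constructor=> y rxy; have [Iy lt_yx] := r_dec x y Ix rxy.
by apply: IH Iy; apply: leq_trans lt_yx _.
Qed.

Lemma clos_refl_trans_inv (T : Type) (r : T -> T -> Prop) (I : T -> Prop) :
  (forall x y, I x -> r x y -> I y) ->
  forall x y, clos_refl_trans T r x y -> I x -> I y.
Proof.
move=> r_inv x y; elim=> [a b rab Ia|//|a b c _ IH1 _ IH2 /IH1 /IH2 //].
exact: r_inv rab.
Qed.

Section MinMaxCostPathSearch.
Variables (R : realFieldType) (V : finType) (E : rel V) (n : nat)
  (fe : 'I_n -> V -> V -> R) (beta : seq R -> R)
  (w : 'I_n -> R) (rho : R) (s g : V).

Local Notation f := (fcost fe beta).
Local Notation cm := (cmax fe beta w rho).
Local Notation relax := (relax fe beta w rho s).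
Local Notation expand L P ns := (foldl (fun L' u => relax L' P u) L ns).

Hypothesis w_ge0 : forall i, 0 <= w i.
Hypothesis rho_ge0 : 0 <= rho.

Lemma maxw_homo p q : (forall i, f i p <= f i q) -> maxw fe beta w p <= maxw fe beta w q.
Proof.
move=> le_pq; have le_wpq i : w i * f i p <= w i * f i q := ler_wpM2l (w_ge0 i) (le_pq i).
rewrite /maxw /index_enum -enumT; case en: (enum 'I_n) => [|i0 r] /=.
  by rewrite !big_nil.
have in_r i : i \in i0 :: r by rewrite -en mem_enum.
by apply: bigmax_le => [|i _]; apply: le_trans (le_wpq _) (le_bigmax_seq _ _ _ _ (in_r _) _).
Qed.

Lemma cmax_homo p q : (forall i, f i p <= f i q) -> cm p <= cm q.
Proof.
move=> le_pq; rewrite /cmax lerD ?maxw_homo //.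
by rewrite ler_wpM2l // ler_sum // => i _.
Qed.

Lemma walk_rcons p u : walk E p -> walk E (rcons p u) = E (last s p) u.
Proof. by case: p => //= x t wp; rewrite rcons_path wp. Qed.

Lemma is_path_rcons p u :
  is_path E p -> E (last s p) u -> uniq (rcons p u) -> is_path E (rcons p u).
Proof. by case/andP=> wp _ e_u u_pu; rewrite /is_path walk_rcons ?e_u. Qed.

Lemma rcons_neq0 (T : eqType) (p : seq T) x : rcons p x != [::].
Proof. by case: p. Qed.

Lemma is_path_neq0 p : is_path E p -> p != [::].
Proof. by case: p. Qed.

Lemma is_path_catl p q : p != [::] -> is_path E (p ++ q) -> is_path E p.
Proof.
case: p => // x t _; rewrite /is_path cat_uniq /= cat_path.
by case/andP=> /andP[-> _] /andP[-> _].
Qed.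

Hypothesis fcost_cat : forall (i : 'I_n) (p q : seq V), is_path E p ->
  walk E (p ++ q) -> f i p <= f i (p ++ q).
Hypothesis fcost_cat_homo : forall (i : 'I_n) (p p' q : seq V),
  is_path E p -> is_path E p' -> last s p = last s p' ->
  walk E (p ++ q) -> walk E (p' ++ q) -> f i p' <= f i p -> f i (p' ++ q) <= f i (p ++ q).

Lemma fcost_catl i p q : p != [::] -> is_path E (p ++ q) -> f i p <= f i (p ++ q).
Proof.
by move=> p0 pq; apply: fcost_cat; [exact: is_path_catl pq | case/andP: pq].
Qed.

Definition covered (ps : seq (seq V)) (q : seq V) : Prop :=
  exists2 p, p \in ps & last s p = last s q /\ forall i, f i p <= f i q.

Lemma covered_sub ps ps' q : {subset ps <= ps'} -> covered ps q -> covered ps' q.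
Proof. by move=> sub [p /sub]; exists p. Qed.

Lemma covered_trans ps q q' : covered ps q ->
  last s q = last s q' -> (forall i, f i q <= f i q') -> covered ps q'.
Proof.
case=> p ps_p [lpq le_pq] lqq' le_qq'; exists p => //; split; first by rewrite lpq.
by move=> i; apply: le_trans (le_pq i) (le_qq' i).
Qed.

Lemma mem_relax L P u t : t \in relax L P u ->
  t \in L \/ t = (cm (rcons P u), u, rcons P u) /\ uniq (rcons P u).
Proof.
rewrite /relax; case: ifP => [_|]; first by left.
move/negbT; rewrite negb_or negbK => /andP[_ uniq_Pu].
rewrite mem_rcons in_cons mem_filter => /orP[/eqP -> | /andP[_ tL]]; by [right | left].
Qed.

Lemma covered_relax L P u q : covered (unzip2 L) q -> covered (unzip2 (relax L P u)) q.
Proof.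
case=> _ /mapP[t tL ->] [lt le_t]; rewrite /relax; case: ifP => _.
  by exists t.2; [apply: map_f | split].
have [/andP[/eqP tu /andP[/forallP dom _]] | keep] :=
  boolP ((last s t.2 == u) && dominates fe beta (rcons P u) t.2).
- exists (rcons P u); first by rewrite /unzip2 map_rcons mem_rcons mem_head.
  split; first by rewrite last_rcons -tu.
  by move=> i; apply: le_trans (dom i) (le_t i).
- exists t.2; last by split.
  by apply: map_f; rewrite mem_rcons in_cons mem_filter keep tL orbT.
Qed.

Lemma relax_covers_rcons L P u :
  uniq (rcons P u) -> covered (unzip2 (relax L P u)) (rcons P u).
Proof.
move=> uniq_Pu; rewrite /relax uniq_Pu orbF; case: ifP.
  case/hasP=> t tL /andP[/eqP tu /andP[/forallP dom _]].
  by exists t.2; [apply: map_f | rewrite last_rcons].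
by exists (rcons P u); rewrite ?/unzip2 ?map_rcons ?mem_rcons ?mem_head.
Qed.

Lemma mem_expand L P ns t : t \in expand L P ns -> t \in L \/
  exists2 u, u \in ns & t = (cm (rcons P u), u, rcons P u) /\ uniq (rcons P u).
Proof.
elim: ns L => [|a ns IH] L /=; first by left.
case/IH=> [/mem_relax[|new] | [u u_ns new]]; [by left | right | right].
  by exists a; rewrite ?mem_head.
by exists u; rewrite ?in_cons ?u_ns ?orbT.
Qed.

Lemma covered_expand L P ns q :
  covered (unzip2 L) q -> covered (unzip2 (expand L P ns)) q.
Proof. by elim: ns L => [|a ns IH] L //= cov; apply/IH/covered_relax. Qed.

Lemma expand_covers_rcons L P ns u : u \in ns -> uniq (rcons P u) ->
  covered (unzip2 (expand L P ns)) (rcons P u).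
Proof.
elim: ns L => [//|a ns IH] L; rewrite in_cons => /orP[/eqP -> | u_ns] uniq_Pu /=.
  exact/covered_expand/relax_covers_rcons.
exact: IH.
Qed.

Definition wf_entry (t : tuple_t R V) : Prop :=
  [/\ t.1.1 = cm t.2, t.1.2 = last s t.2, is_path E t.2 & head s t.2 = s].

Definition wf_open (L : seq (tuple_t R V)) : Prop := forall t, t \in L -> wf_entry t.

Definition prefix_closed (ps H : seq (seq V)) : Prop :=
  forall p q, p != [::] -> q != [::] -> p ++ q \in ps -> p \in H.

Definition closed_inv (H : seq (seq V)) (L : seq (tuple_t R V)) : Prop :=
  [/\ forall h, h \in H -> is_path E h /\ last s h != g,
      forall h u, h \in H -> E (last s h) u -> uniq (rcons h u) ->
        covered (H ++ unzip2 L) (rcons h u),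
      prefix_closed (H ++ unzip2 L) H
    & covered (H ++ unzip2 L) [:: s]].

Definition search_inv H L : Prop := wf_open L /\ closed_inv H L.

Lemma wf_open_expand L P ns : wf_open L -> is_path E P -> head s P = s ->
  (forall u, u \in ns -> E (last s P) u) -> wf_open (expand L P ns).
Proof.
move=> wfL pP hP ns_E t /mem_expand[/wfL // | [u u_ns [-> uniq_Pu]]].
split; rewrite /= ?last_rcons //; first exact: is_path_rcons (ns_E u u_ns) uniq_Pu.
by case: P pP hP {ns_E uniq_Pu}.
Qed.

Lemma mem_unzip2_expand L P ns p :
  p \in unzip2 (expand L P ns) -> p \in unzip2 L \/ exists u, p = rcons P u.
Proof.
case/mapP=> t /mem_expand[tL -> | [u _ [-> _]]]; last by right; exists u.
by left; apply: map_f.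
Qed.

Lemma mem_unzip2_rem (S T : eqType) (L : seq (S * T)) t p :
  t \in L -> p \in unzip2 L -> p = t.2 \/ p \in unzip2 (rem t L).
Proof.
move=> tL /mapP[t' t'L ->]; have [-> | t't] := eqVneq t' t; first by left.
by right; apply/map_f/rem_mem.
Qed.

Section Expansion.
Variables (H : seq (seq V)) (L : seq (tuple_t R V)) (c : R) (v : V) (P ns : seq V).
Hypothesis entry_L : (c, v, P) \in L.

Let H' := P :: H.
Let L' := expand (rem (c, v, P) L) P ns.

Lemma covered_expand_step q : covered (H ++ unzip2 L) q -> covered (H' ++ unzip2 L') q.
Proof.
case=> p; rewrite mem_cat => /orP[pH | /(mem_unzip2_rem entry_L)[-> | p_rem]] cov_p.
- by exists p; rewrite // in_cons mem_cat pH orbT.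
- by exists P; rewrite ?mem_head.
- have /(covered_expand P ns) : covered (unzip2 (rem (c, v, P) L)) q by exists p.
  by apply: covered_sub => x; rewrite in_cons mem_cat => ->; rewrite !orbT.
Qed.

Lemma prefix_closed_expand :
  prefix_closed (H ++ unzip2 L) H -> prefix_closed (H' ++ unzip2 L') H'.
Proof.
move=> closed p q p0 q0.
have closed_open q' : q' != [::] -> p ++ q' \in unzip2 L -> p \in H'.
  by move=> q'0 pq'; rewrite in_cons (closed p q') ?mem_cat ?pq' ?orbT.
rewrite in_cons mem_cat => /or3P[/eqP pqP | pqH | /mem_unzip2_expand[pq_rem | [u]]].
- by apply: (closed_open q); rewrite // pqP (map_f (fun t => t.2) entry_L).
- by rewrite in_cons (closed p q) ?mem_cat ?pqH ?orbT.
- apply: (closed_open q) => //; move: pq_rem.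
  by case/mapP=> t /mem_rem t_L ->; apply: map_f.
- case/lastP: q q0 => [//|q x] _; rewrite -rcons_cat => /rcons_inj[pqP _].
  have [q0 | q0] := eqVneq q [::]; last first.
    by apply: (closed_open q); rewrite // pqP (map_f (fun t => t.2) entry_L).
  by move: pqP; rewrite q0 cats0 in_cons => ->; rewrite eqxx.
Qed.

Lemma closed_inv_expand : last s P = v -> v != g -> is_path E P ->
  (forall u, (u \in ns) = E v u) -> closed_inv H L -> closed_inv H' L'.
Proof.
move=> lP vg pP ns_E [closedH coverH prefH cover_s]; split.
- by move=> h; rewrite in_cons => /orP[/eqP -> | /closedH //]; rewrite lP.
- move=> h u; rewrite in_cons => /orP[/eqP -> | hH] e_u uniq_hu.
    have u_ns : u \in ns by rewrite ns_E -lP.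
    apply: covered_sub (expand_covers_rcons (rem (c, v, P) L) u_ns uniq_hu) => x.
    by rewrite in_cons mem_cat => ->; rewrite !orbT.
  exact/covered_expand_step/coverH.
- exact: prefix_closed_expand.
- exact: covered_expand_step.
Qed.

Lemma search_inv_expand : last s P = v -> is_path E P -> head s P = s -> v != g ->
  (forall u, (u \in ns) = E v u) -> wf_open (rem (c, v, P) L) -> closed_inv H L ->
  search_inv H' L'.
Proof.
move=> lP pP hP vg ns_E wf_rem inv; split; last exact: closed_inv_expand.
by apply: wf_open_expand => // u; rewrite ns_E lP.
Qed.

End Expansion.

Lemma closed_prefix_at ps H h u : prefix_closed ps H ->
  h \in ps -> is_path E h -> u \in h -> u != last s h ->
  exists2 p, p \in H & last s p = u /\ forall i, f i p <= f i h.
Proof.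
move=> closed + + u_h; case/splitPr: u_h => h1 h2 hps ph; rewrite last_cat /= => u_lh.
have h2_0 : h2 != [::] by case: h2 {hps ph} u_lh; rewrite //= eqxx.
exists (rcons h1 u); last split.
- by apply: (closed _ h2); rewrite ?cat_rcons ?rcons_neq0.
- exact: last_rcons.
- by move=> i; rewrite -cat_rcons fcost_catl ?cat_rcons ?rcons_neq0.
Qed.

Lemma covered_rcons H L q u : closed_inv H L -> covered H q ->
  is_path E q -> is_path E (rcons q u) -> covered (H ++ unzip2 L) (rcons q u).
Proof.
case=> closedH coverH prefH _ [h hH [lhq le_hq]] pq pqu.
have [ph _] := closedH h hH.
have wh : walk E h by case/andP: ph.
have wq : walk E q by case/andP: pq.
have q0 := is_path_neq0 pq.
have e_u : E (last s h) u by rewrite lhq -walk_rcons //; case/andP: pqu.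
have [uniq_hu | ] := boolP (uniq (rcons h u)).
  apply: covered_trans (coverH h u hH e_u uniq_hu) _ _; first by rewrite !last_rcons.
  move=> i; rewrite -!cats1; apply: fcost_cat_homo; rewrite ?cats1 ?walk_rcons //.
  by rewrite -lhq.
(* u already lies on h: the prefix of h ending at u is closed and cheaper *)
rewrite rcons_uniq; case/andP: (ph) => _ -> /[!andbT] /negPn u_h.
have u_lh : u != last s h.
  apply: contraTneq pqu => ->; rewrite /is_path rcons_uniq lhq.
  by case: q q0 {pq wq le_hq lhq} => //= x t _; rewrite mem_last andbF.
have hHL : h \in H ++ unzip2 L by rewrite mem_cat hH.
have [p pH [lp le_ph]] := closed_prefix_at prefH hHL ph u_h u_lh.
exists p; first by rewrite mem_cat pH.
split=> [|i]; first by rewrite last_rcons.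
apply: le_trans (le_ph i) (le_trans (le_hq i) _).
by rewrite -cats1 fcost_catl ?cats1.
Qed.

Lemma covered_closed H L q Q : wf_open L -> (forall t, t \in L -> cm Q < t.1.1) ->
  (forall i, f i q <= f i Q) -> covered (H ++ unzip2 L) q -> covered H q.
Proof.
move=> wfL cheap le_qQ [p]; rewrite mem_cat => /orP[pH | /mapP[t tL ->]] [lp le_pq].
  by exists p.
have [cost_t _ _ _] := wfL t tL.
have := cheap t tL; rewrite cost_t ltNge cmax_homo // => i.
exact: le_trans (le_pq i) (le_qQ i).
Qed.

Lemma covered_prefix H L Q : search_inv H L -> is_path E Q -> head s Q = s ->
  (forall t, t \in L -> cm Q < t.1.1) ->
  forall q r, q != [::] -> q ++ r = Q -> covered H q.
Proof.
case=> wfL invHL pQ hQ cheap; have [_ _ _ cover_s] := invHL.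
have le_Q q r i : q != [::] -> q ++ r = Q -> f i q <= f i Q.
  by move=> q0 qrQ; rewrite -qrQ fcost_catl // qrQ.
elim/last_ind => [//|q u IH] r _ qrQ.
have [q0 | q0] := eqVneq q [::].
  rewrite q0 in qrQ *; have us : u = s by rewrite -hQ -qrQ.
  rewrite us in qrQ *; apply: covered_closed wfL cheap _ cover_s => i.
  exact: (le_Q _ _ _ _ qrQ).
have pqu : is_path E (rcons q u) by apply: (@is_path_catl _ r (rcons_neq0 q u)); rewrite qrQ.
have pq : is_path E q by apply: (@is_path_catl _ [:: u] q0); rewrite cats1.
apply: covered_closed wfL cheap (fun i => le_Q _ _ i (rcons_neq0 q u) qrQ) _.
by apply: covered_rcons invHL (IH (u :: r) q0 _) pq pqu; rewrite -cat_rcons.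
Qed.

Lemma exists_open_le_cmax H L Q :
  search_inv H L -> sg_path E s g Q -> exists2 t, t \in L & t.1.1 <= cm Q.
Proof.
move=> inv /and3P[pQ /eqP hQ /eqP lQ].
have [/hasP[t tL le_t] | /hasPn cheap] := boolP (has (fun t => t.1.1 <= cm Q) L).
  by exists t.
have cheap' t : t \in L -> cm Q < t.1.1 by move/cheap; rewrite ltNge.
have [h hH [lh _]] := covered_prefix inv pQ hQ cheap' (is_path_neq0 pQ) (cats0 Q).
have [_ [closedH _ _ _]] := inv; have [_] := closedH h hH.
by rewrite lh lQ eqxx.
Qed.

Local Notation K := #|V|.+1.

Definition open_weight (L : seq (tuple_t R V)) : nat := (\sum_(t <- L) K ^ (K - size t.2))%N.

Lemma open_weight_rem L t :
  t \in L -> open_weight L = (K ^ (K - size t.2) + open_weight (rem t L))%N.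
Proof. by move=> tL; rewrite /open_weight (perm_big _ (perm_to_rem tL)) big_cons. Qed.

Lemma open_weight_relax L P u :
  (open_weight (relax L P u) <= open_weight L + K ^ (K - (size P).+1))%N.
Proof.
rewrite /relax; case: ifP => _; first exact: leq_addr.
rewrite /open_weight -cats1 big_cat big_seq1 /= size_rcons leq_add2r big_filter.
by rewrite [X in (X <= _)%N]big_mkcond leq_sum // => t _; case: ifP.
Qed.

Lemma open_weight_expand L P ns :
  (open_weight (expand L P ns) <= open_weight L + size ns * K ^ (K - (size P).+1))%N.
Proof.
elim: ns L => [|u ns IH] L /=; first by rewrite addn0.
by rewrite (leq_trans (IH _)) // mulSn addnA leq_add2r open_weight_relax.
Qed.

Lemma open_weight_expand_lt L c v P ns : (c, v, P) \in L -> uniq P -> (size ns <= #|V|)%N ->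
  (open_weight (expand (rem (c, v, P) L) P ns) < open_weight L)%N.
Proof.
move=> tL uniq_P ns_le; rewrite (open_weight_rem tL) addnC /=.
have P_lt : (size P < K)%N by rewrite ltnS -(card_uniqP uniq_P) max_card.
rewrite -(subnSK P_lt) expnS (leq_ltn_trans (open_weight_expand _ _ _)) //.
by rewrite ltn_add2l ltn_pmul2r ?expn_gt0.
Qed.

Definition state_weight (st : state R V) : nat :=
  if st is Open L then (open_weight L).+1 else 0.

Definition open_uniq (st : state R V) : Prop :=
  if st is Open L then forall t, t \in L -> uniq t.2 else True.

Lemma step_decreases st st' : open_uniq st -> step E fe beta w rho s g st st' ->
  open_uniq st' /\ (state_weight st' < state_weight st)%N.
Proof.
move=> + hst; case: hst => //= L c v P ns tL _ _ hns uniq_L; split.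
  by move=> t /mem_expand[/mem_rem/uniq_L // | [u _ [-> ]]].
apply: open_weight_expand_lt tL (uniq_L _ tL) _.
by rewrite (perm_size hns) size_filter cardE count_size.
Qed.

Lemma search_terminates : Acc (fun y x => step E fe beta w rho s g x y) (init_state R s).
Proof. by apply: (acc_measure step_decreases) => /= t; rewrite mem_seq1 => /eqP ->. Qed.

(* The initial entry carries cost 0 rather than c^max [:: s], so it is not a
   [wf_entry] and needs its own case. *)
Definition sound (st : state R V) : Prop :=
  match st with
  | Open L => L = [:: (0, s, [:: s])] \/ exists H, search_inv H L
  | Ret P => sg_path E s g P /\ forall Q, sg_path E s g Q -> cm P <= cm Q
  | Fail => False
  end.

Lemma sg_path_loop Q : s = g -> sg_path E s g Q -> Q = [:: s].
Proof.
move=> <- /and3P[/andP[walk_Q uniq_Q] /eqP hQ /eqP lQ].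
case: Q walk_Q hQ uniq_Q lQ => [//|x t] _ /= -> uniq_st.
by case: t uniq_st => // y t /andP[s_yt _] /= lt; move: s_yt; rewrite -{1}lt mem_last.
Qed.

Lemma closed_inv_init : closed_inv [::] [:: (0, s, [:: s])].
Proof.
split=> [h | h u | p q p0 q0 | ] //; last by exists [:: s]; [rewrite /= mem_head | split].
case: p p0 => // x p _; rewrite /= mem_seq1 => /eqP[_ /(congr1 size)/eqP].
by rewrite size_cat addn_eq0 !size_eq0 (negbTE q0) andbF.
Qed.

Lemma sound_step : (exists Q, sg_path E s g Q) ->
  forall st st', sound st -> step E fe beta w rho s g st st' -> sound st'.
Proof.
move=> [Q sgQ] st st' + hst; case: hst => [|L c v P tL min vg|L c v P ns tL min vg hns].
- by case=> [//|[H inv]]; have [] := exists_open_le_cmax inv sgQ.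
- case=> [L1 | [H inv]].
    move: tL; rewrite L1 mem_seq1 => /eqP[_ vs ->]; rewrite vs in vg; split.
      by rewrite /sg_path /is_path /= -vg !eqxx.
    by move=> Q' /(sg_path_loop vg) ->.
  have [cP vP pP hP] := inv.1 _ tL.
  split; first by rewrite /sg_path pP hP -vP vg !eqxx.
  move=> Q' /(exists_open_le_cmax inv)[t tL' le_t].
  by rewrite -cP (le_trans (min t tL') le_t).
have ns_E u : (u \in ns) = E v u by rewrite (perm_mem hns) mem_filter mem_enum andbT.
move/eqP: vg => vg [L1 | [H [wfL inv]]]; right.
  move: tL; rewrite L1 mem_seq1 => /eqP[c0 v0 P0]; subst c v P L.
  by exists [:: [:: s]]; apply: search_inv_expand closed_inv_init; rewrite //= ?mem_head ?eqxx.
have [_ vP pP hP] := wfL _ tL.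
exists (P :: H); apply: search_inv_expand tL (esym vP) pP hP vg ns_E _ inv.
by move=> t /mem_rem /wfL.
Qed.

Lemma open_step L : L != [::] -> exists st', step E fe beta w rho s g (Open L) st'.
Proof.
pose le_cost (t t' : tuple_t R V) := t.1.1 <= t'.1.1.
have le_cost_trans : transitive le_cost by move=> ? ? ?; apply: le_trans.
have := sort_sorted (fun t t' => le_total t.1.1 t'.1.1) L.
have mem_sortL := mem_sort le_cost L; rewrite -size_eq0 -(size_sort le_cost).
case: (sort le_cost L) mem_sortL => [//|[[c v] P] L'] mem_sortL /= sorted_L _.
have tL : (c, v, P) \in L by rewrite -mem_sortL mem_head.
have min t : t \in L -> c <= t.1.1.
  rewrite -mem_sortL in_cons => /orP[/eqP -> // | ].
  by apply/allP: t; apply: order_path_min sorted_L.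
have [vg | vg] := eqVneq v g; first by exists (Ret R P); apply: step_goal tL min vg.
by eexists; apply: step_expand tL min (elimN eqP vg) (perm_refl _).
Qed.

Lemma search_correct : (exists Q, sg_path E s g Q) ->
  forall st, clos_refl_trans _ (step E fe beta w rho s g) (init_state R s) st ->
  (forall st', ~ step E fe beta w rho s g st st') ->
  exists P, st = Ret R P /\ sg_path E s g P /\ (forall Q, sg_path E s g Q -> cm P <= cm Q).
Proof.
move=> exQ st run stuck.
have : sound st := clos_refl_trans_inv (sound_step exQ) run (or_introl erefl).
case: st {run} stuck => [L | P | //] stuck; last by exists P.
move=> sound_L; have L0 : L != [::].
  case: sound_L => [-> // | [H inv]]; have [Q sgQ] := exQ.
  by have [t tL _] := exists_open_le_cmax inv sgQ; apply: contraTneq tL => ->.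
by have [st' ] := open_step L0; move/stuck.
Qed.

Lemma sg_path_of_connect : connect E s g -> exists Q, sg_path E s g Q.
Proof.
case/connectP=> p walk_p lp; case: (shortenP walk_p) lp => q walk_q uniq_q _ lq.
by exists (s :: q); rewrite /sg_path /is_path uniq_q /= walk_q lq !eqxx.
Qed.

End MinMaxCostPathSearch.

Theorem mainTheorem3 (R : realFieldType) (V : finType) (E : rel V) (n : nat)
  (fe : 'I_n -> V -> V -> R) (beta : seq R -> R)
  (w : 'I_n -> R) (rho : R) (s g : V) :
  (forall x y : V, connect E x y) ->
  (forall (i : 'I_n) (x y : V), E x y -> 0 <= fe i x y) ->
  (* monotonicity of beta: extending a path never decreases any f_i *)
  (forall (i : 'I_n) (p q : seq V), is_path E p -> walk E (p ++ q) ->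
     fcost fe beta i p <= fcost fe beta i (p ++ q)) ->
  (* monotonicity of beta: domination is preserved by common continuations *)
  (forall (i : 'I_n) (p p' q : seq V), is_path E p -> is_path E p' ->
     last s p = last s p' -> walk E (p ++ q) -> walk E (p' ++ q) ->
     fcost fe beta i p' <= fcost fe beta i p ->
     fcost fe beta i (p' ++ q) <= fcost fe beta i (p ++ q)) ->
  (0 < n)%N ->
  (forall i : 'I_n, 0 <= w i <= 1) ->
  0 < rho ->
  (* the algorithm terminates on every run ... *)
  Acc (fun y x => step E fe beta w rho s g x y) (init_state R s) /\
  (* ... and every run returns an optimal s-g path *)
  (forall st, clos_refl_trans _ (step E fe beta w rho s g) (init_state R s) st ->
     (forall st', ~ step E fe beta w rho s g st st') ->
     exists P : seq V, st = Ret R P /\ sg_path E s g P /\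
       (forall Q, sg_path E s g Q -> cmax fe beta w rho P <= cmax fe beta w rho Q)).
Proof.
move=> conn _ fcost_cat fcost_cat_homo _ w01 rho_gt0.
have w_ge0 i : 0 <= w i by case/andP: (w01 i).
split; first exact: search_terminates.
apply: search_correct w_ge0 (ltW rho_gt0) fcost_cat fcost_cat_homo _.
exact: sg_path_of_connect.
Qed.
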